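(* Let $p$ be an odd prime and let $x$ be a $p$-adic integer. Then $$\sum_{k=0}^{p-1}\frac{\binom{2k}{k}}{4^k}\, d_k(x)^2 \equiv (-1)^{\frac{p-1}{2}}\sum_{j=0}^{\frac{p-1}{2}}\binom{x}{j}\binom{x+j}{j}\binom{j}{\frac{p-1}{2}-j}4^j \pmod p.$$
   Context: For a $p$-adic number $x$ and an integer $k\ge 0$, $\binom{x}{k}=\frac{x(x-1)\cdots(x-k+1)}{k!}$; for integers $j\ge0$ and $m$, $\binom{j}{m}=0$ if $m<0$ or $m>j$. The polynomials $d_n(x)$ are defined by $d_n(x)=\sum_{k=0}^{n}\binom{n}{k}\binom{x}{k}2^k$. Congruences are taken in the ring of $p$-adic integers. *)

From HB Require Import structures.
From mathcomp Require Import all_boot all_order all_algebra.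
Set Implicit Arguments. Unset Strict Implicit. Unset Printing Implicit Defensive.
Import Order.TTheory GRing.Theory Num.Theory.
Local Open Scope ring_scope.

Definition binomR (F : fieldType) (x : F) (k : nat) : F :=
  (\prod_(i < k) (x - i%:R)) / (k`!)%:R.

Definition dpoly (F : fieldType) (n : nat) (x : F) : F :=
  \sum_(k < n.+1) ('C(n, k))%:R * binomR x k * 2 ^+ k.

From HB Require Import structures.
From mathcomp Require Import all_boot all_order all_algebra.
From mathcomp Require Import ring zify.
Import Order.TTheory GRing.Theory Num.Theory.
Local Open Scope ring_scope.

(* Write x = m%:R.  Then d_k(x) is the Delannoy number D(k, m) for k < p, and,
   with n = (p - 1)/2, C(2k, k) = (-4)^k C(n, k) mod p because 2n + 1 = 0 in F_p
   (C(2k, k)/(-4)^k = C(-1/2, k) and -1/2 = n).  The left-hand side becomes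
   sum_k (-1)^k C(n, k) D(k, m)^2, and the congruence follows from two integer
   identities: D(k, m)^2 = sum_j C(m, j) C(m + j, j) 4^j C(k + j, 2j), proved by
   induction on k from the three-term recurrence of D(., m) together with an
   auxiliary sum with C(k + j, 2j + 1), and the finite-difference evaluation
   sum_k (-1)^k C(n, k) C(k + j, 2j) = (-1)^n C(j, n - j), read as 0 for j > n. *)

Lemma big_ord_trunc {R : Type} {idx : R} {op : Monoid.law idx} {F : nat -> R} {a N : nat} :
  (a <= N)%N -> (forall i, (a <= i < N)%N -> F i = idx) ->
  \big[op/idx]_(i < N) F i = \big[op/idx]_(i < a) F i.
Proof.
move=> le_aN F0; rewrite -!(big_mkord xpredT) (big_cat_nat (leq0n a) le_aN) /=.
rewrite [X in op _ X]big1_seq ?Monoid.mulm1 // => i /andP[_].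
by rewrite mem_index_iota; apply: F0.
Qed.

Lemma natr_mul_bin_left (R : pzRingType) n m :
  m.+1%:R * 'C(n, m.+1)%:R = (n%:R - m%:R) * 'C(n, m)%:R :> R.
Proof.
case: (leqP m n) => [le_mn | lt_nm]; first by rewrite -natrB // -!natrM mul_bin_left.
by rewrite !bin_small ?mulr0 // ltnW.
Qed.

Local Open Scope nat_scope.

Lemma mul_bin_three_term n i :
  n.+1 * 'C(n.+1, i) = i.*2.+1 * 'C(n, i) + i * 'C(n, i.-1) + n * 'C(n.-1, i).
Proof.
case: i => [|i]; first by rewrite !bin0; lia.
rewrite binS mul_bin_down /=.
have := mul_bin_left n i.
case: (ltnP i n) => [lt_in | le_ni].
  move: ('C(n, i.+1)) ('C(n, i)) => c1 c0.
  rewrite -(subnKC lt_in) -addnn; move: (n - i.+1) => d.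
  have -> : i.+1 + d - i = d.+1 by lia.
  have -> : i.+1 + d - i.+1 = d by lia.
  nia.
have -> : 'C(n, i.+1) = 0 by rewrite bin_small.
case: (ltnP n i) => [/bin_small-> | le_in _]; first lia.
by rewrite (_ : n = i); lia.
Qed.

Definition delannoy n m := \sum_(i < n.+1) 'C(n, i) * 'C(m, i) * 2 ^ i.

Lemma delannoyE n m N : n < N ->
  delannoy n m = \sum_(i < N) 'C(n, i) * 'C(m, i) * 2 ^ i.
Proof.
move=> lt_nN; rewrite (big_ord_trunc (F := fun i => 'C(n, i) * 'C(m, i) * 2 ^ i) lt_nN) //.
by move=> i /andP[/bin_small-> _].
Qed.

Lemma delannoy_rec n m :
  n.+1 * delannoy n.+1 m = m.*2.+1 * delannoy n m + n * delannoy n.-1 m.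
Proof.
pose a i := 'C(m, i) * 2 ^ i.
have shift_a i : i.+1 * a i.+1 = (m - i).*2 * a i.
  by rewrite /a mulnA mul_bin_left expnS -muln2; ring.
have shift : \sum_(i < n.+2) i * 'C(n, i.-1) * a i
           = \sum_(i < n.+1) (m - i).*2 * 'C(n, i) * a i.
  rewrite big_ord_recl mul0n add0n; apply: eq_bigr => i _.
  by rewrite lift0 /= mulnAC shift_a mulnAC.
have split_term i : n.+1 * ('C(n.+1, i) * 'C(m, i) * 2 ^ i)
    = i.*2.+1 * 'C(n, i) * a i + i * 'C(n, i.-1) * a i + n * ('C(n.-1, i) * 'C(m, i) * 2 ^ i).
  transitivity (n.+1 * 'C(n.+1, i) * a i); first by rewrite /a; ring.
  by rewrite mul_bin_three_term /a; ring.
rewrite (delannoyE _ m n.+2) // (delannoyE n m n.+2) // (delannoyE n.-1 m n.+2); last by lia.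
rewrite !big_distrr /=; under eq_bigr do rewrite split_term.
rewrite [LHS]big_split [in LHS]big_split /= shift; congr (_ + _).
rewrite big_ord_recr /= bin_small // muln0 mul0n addn0 -big_split /=.
rewrite [in RHS]big_ord_recr /= bin_small // !(mul0n, muln0) addn0.
apply: eq_bigr => i _; rewrite /a.
case: (leqP i m) => [le_im | /bin_small->]; last by rewrite !(muln0, mul0n).
rewrite -!mulnDl (_ : i.*2.+1 + (m - i).*2 = m.*2.+1) ?mulnA //.
by rewrite -!addnn; lia.
Qed.

Definition bin_even_odd k j := 'C(k + j, j.*2) + 2 * 'C(k + j, j.*2.+1).

Lemma bin_double_rec k j :
  k.+2 ^ 2 * 'C(k.+2 + j, j.*2)
  = j.*2.+1 ^ 2 * bin_even_odd k.+1 j + j ^ 2 * bin_even_odd k.+1 j.-1 + k.+1 ^ 2 * 'C(k + j, j.*2).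
Proof.
case: j => [|i].
  by rewrite /bin_even_odd !addn0 double0 !bin0 bin1; ring.
rewrite /bin_even_odd /= !doubleS !addnS !addSn.
move eN : (k + i).+1 => N.
rewrite !binS; apply/eqP; rewrite -(eqr_nat int) !(natrD, natrM, natrX) -subr_eq0.
have rel := natr_mul_bin_left int N.
move: (rel i.*2) (rel i.*2.+1) (rel i.*2.+2).
move: 'C(N, i.*2)%:R 'C(N, i.*2.+1)%:R 'C(N, i.*2.+2)%:R 'C(N, i.*2.+3)%:R => B0 B1 B2 B3.
rewrite -eN => r1 r2 r3; apply/eqP.
(* The difference of the two sides is this combination of the relations
   [mul_bin_left] among C(N, 2i), ..., C(N, 2i+3). *)
transitivity (- (k + i + 3)%:R * (i.*2.+1%:R * B1 - ((k + i).+1%:R - i.*2%:R) * B0)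
  - (k.*2 + 4 * i + 9)%:R * (i.*2.+2%:R * B2 - ((k + i).+1%:R - i.*2.+1%:R) * B1)
  - (4 * i + 6)%:R * (i.*2.+3%:R * B3 - ((k + i).+1%:R - i.*2.+2%:R) * B2) : int).
  rewrite -!addnn; ring.
by rewrite r1 r2 r3 !subrr !mulr0 !subrr.
Qed.

(* The coefficient of t^j in P_m(1 + 8t), where P_m is the Legendre polynomial. *)
Definition legendre_coef m j := 'C(m, j) * 'C(m + j, j) * 4 ^ j.

Lemma legendre_coef_rec m j :
  m.*2.+1 ^ 2 * legendre_coef m j
  = j.+1 ^ 2 * legendre_coef m j.+1 + j.*2.+1 ^ 2 * legendre_coef m j.
Proof.
rewrite /legendre_coef; case: (leqP j m) => [le_jm | lt_mj]; last first.
  by rewrite (bin_small lt_mj) (bin_small (leqW lt_mj)) !mul0n !muln0.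
have e1 := mul_bin_left m j.
have e2 := mul_bin_diag (m + j).+1 j.
rewrite /= in e2.
transitivity ((j.+1 * 'C(m, j.+1)) * (j.+1 * 'C(m + j.+1, j.+1)) * 4 ^ j.+1
              + j.*2.+1 ^ 2 * ('C(m, j) * 'C(m + j, j) * 4 ^ j)); last by ring.
rewrite e1 addnS -e2 (expnS 4).
move: ('C(m, j)) ('C(m + j, j)) (4 ^ j) => a b c.
rewrite -(subnKC le_jm) addKn -!addnn; ring.
Qed.

Section LegendreSums.

Variable m : nat.

Definition legendre_sum k := \sum_(j < m.+1) legendre_coef m j * 'C(k + j, j.*2).
Definition legendre_sum_odd k := \sum_(j < m.+1) legendre_coef m j * 'C(k + j, j.*2.+1).

Lemma legendre_sum0 : legendre_sum 0 = 1.
Proof.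
rewrite /legendre_sum big_ord_recl big1 => [|j _]; last first.
  by rewrite lift0 bin_small ?muln0 // -addnn; lia.
by rewrite /legendre_coef !bin0 addn0.
Qed.

Lemma legendre_sum1 : legendre_sum 1 = m.*2.+1 ^ 2.
Proof.
rewrite /legendre_sum big_ord_recl; case: m => [|m'].
  by rewrite big_ord0 /legendre_coef.
rewrite big_ord_recl big1 => [|j _]; last first.
  by rewrite !lift0 bin_small ?muln0 // -addnn; lia.
rewrite /legendre_coef /= !bin0 bin1 binn addn1 bin1 -!addnn; ring.
Qed.

Lemma legendre_sum_odd0 : legendre_sum_odd 0 = 0.
Proof.
by rewrite /legendre_sum_odd big1 // => j _; rewrite bin_small ?muln0 // -addnn; lia.
Qed.

Lemma legendre_sum_oddS k : legendre_sum_odd k.+1 = legendre_sum k + legendre_sum_odd k.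
Proof.
rewrite /legendre_sum /legendre_sum_odd -big_split; apply: eq_bigr => j _.
by rewrite addSn binS mulnDr addnC.
Qed.

Lemma legendre_sum_rec k :
  k.+2 ^ 2 * legendre_sum k.+2
  = m.*2.+1 ^ 2 * (legendre_sum k.+1 + 2 * legendre_sum_odd k.+1) + k.+1 ^ 2 * legendre_sum k.
Proof.
pose c := legendre_coef m.
have shift : \sum_(j < m.+1) c j * (j ^ 2 * bin_even_odd k.+1 j.-1)
           = \sum_(j < m.+1) j.+1 ^ 2 * c j.+1 * bin_even_odd k.+1 j.
  have cm : c m.+1 = 0 by rewrite /c /legendre_coef bin_small.
  rewrite big_ord_recl mul0n muln0 add0n [RHS]big_ord_recr /= cm muln0 mul0n addn0.
  by apply: eq_bigr => j _; rewrite /bump /= add0n; ring.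
have sum_bin_even_odd :
    legendre_sum k.+1 + 2 * legendre_sum_odd k.+1 = \sum_(j < m.+1) c j * bin_even_odd k.+1 j.
  rewrite /legendre_sum /legendre_sum_odd big_distrr -big_split /=.
  by apply: eq_bigr => j _; rewrite /bin_even_odd; ring.
have split_term j : k.+2 ^ 2 * (c j * 'C(k.+2 + j, j.*2))
    = c j * (j.*2.+1 ^ 2 * bin_even_odd k.+1 j) + c j * (j ^ 2 * bin_even_odd k.+1 j.-1)
      + k.+1 ^ 2 * (c j * 'C(k + j, j.*2)).
  by rewrite mulnCA bin_double_rec; ring.
rewrite sum_bin_even_odd /legendre_sum !big_distrr /=; under eq_bigr do rewrite split_term.
rewrite [LHS]big_split [in LHS]big_split /= shift; congr (_ + _).
rewrite -big_split /=; apply: eq_bigr => j _.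
transitivity ((j.+1 ^ 2 * c j.+1 + j.*2.+1 ^ 2 * c j) * bin_even_odd k.+1 j); first by ring.
by rewrite -legendre_coef_rec mulnA.
Qed.

End LegendreSums.

Lemma delannoy0 m : delannoy 0 m = 1.
Proof. by rewrite /delannoy big_ord1 !bin0. Qed.

Lemma delannoy1 m : delannoy 1 m = m.*2.+1.
Proof. by rewrite /delannoy !big_ord_recl big_ord0 /= !bin0 !bin1 /bump /= -addnn; lia. Qed.

Lemma delannoy_legendre_sums k m :
  [/\ delannoy k m ^ 2 = legendre_sum m k, delannoy k.+1 m ^ 2 = legendre_sum m k.+1
    & k.+1 * delannoy k.+1 m * delannoy k m = m.*2.+1 * legendre_sum_odd m k.+1].
Proof.
elim: k => [|k [IHk IHk1 IHodd]].
  rewrite delannoy0 delannoy1 legendre_sum0 legendre_sum1 legendre_sum_oddS.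
  by rewrite legendre_sum0 legendre_sum_odd0 mul1n !muln1.
have rec := delannoy_rec k.+1 m; rewrite /= in rec.
have odd_step : k.+2 * delannoy k.+2 m * delannoy k.+1 m = m.*2.+1 * legendre_sum_odd m k.+2.
  by rewrite rec legendre_sum_oddS mulnDr -IHk1 -IHodd; ring.
split=> //; apply/eqP; rewrite -(eqn_pmul2l (expn_gt0 k.+2 2)) legendre_sum_rec.
rewrite -IHk -IHk1 -expnMn rec; apply/eqP.
set U := legendre_sum_odd m k.+1.
have -> : m.*2.+1 ^ 2 * (delannoy k.+1 m ^ 2 + 2 * U)
        = m.*2.+1 ^ 2 * delannoy k.+1 m ^ 2 + 2 * m.*2.+1 * (m.*2.+1 * U) by ring.
by rewrite -IHodd; ring.
Qed.

Lemma delannoy_sqr k m :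
  delannoy k m ^ 2 = \sum_(j < m.+1) legendre_coef m j * 'C(k + j, j.*2).
Proof. by case: (delannoy_legendre_sums k m). Qed.

Local Open Scope ring_scope.

Lemma sum_alt_binS (R : pzRingType) (f : nat -> R) n :
  \sum_(k < n.+2) (-1) ^+ k * 'C(n.+1, k)%:R * f k
  = \sum_(k < n.+1) (-1) ^+ k * 'C(n, k)%:R * (f k - f k.+1).
Proof.
have shifted : \sum_(k < n.+1) (-1) ^+ k * 'C(n, k)%:R * f k
    = f 0 - \sum_(k < n.+1) (-1) ^+ k * 'C(n, k.+1)%:R * f k.+1.
  rewrite big_ord_recl [X in _ - X]big_ord_recr /= (bin_small (ltnSn n)) mulr0 mul0r addr0.
  rewrite bin0 expr0 !mul1r -sumrN; congr (_ + _); apply: eq_bigr => k _.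
  by rewrite /bump /= exprS mulN1r !mulNr.
rewrite big_ord_recl bin0 expr0 !mul1r.
under eq_bigr do rewrite lift0 binS natrD mulrDr mulrDl exprS mulN1r !mulNr.
under [RHS]eq_bigr do rewrite mulrBr.
by rewrite big_split sumrB shifted /= !sumrN addrA.
Qed.

Lemma sum_alt_bin_binom (R : pzRingType) n a b :
  \sum_(k < n.+1) (-1) ^+ k * 'C(n, k)%:R * 'C(k + a, b)%:R
  = (-1) ^+ n * (if (n <= b)%N then 'C(a, b - n) else 0)%:R :> R.
Proof.
elim: n b => [|n IHn] b; first by rewrite big_ord1 expr0 !mul1r add0n subn0.
rewrite (sum_alt_binS _ (fun k => 'C(k + a, b)%:R)); case: b => [|b].
  by rewrite big1 ?mulr0 // => k _; rewrite !bin0 subrr mulr0.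
under eq_bigr do rewrite addSn binS natrD opprD addrA subrr add0r mulrN.
by rewrite sumrN IHn exprS mulN1r mulNr ltnS subSS.
Qed.

Lemma bin_double_sub j n :
  ((if n <= j.*2 then 'C(j, j.*2 - n) else 0) = if j <= n then 'C(j, n - j) else 0)%N.
Proof.
rewrite -addnn; case: (leqP j n) => le_jn; last first.
  by case: ifP => // _; rewrite bin_small //; lia.
case: ifP => le_n2j; last by rewrite bin_small //; lia.
by rewrite -[in RHS]bin_sub; [congr 'C(_, _) | ]; lia.
Qed.

Lemma sum_alt_delannoy_sqr (R : comPzRingType) n m :
  \sum_(k < n.+1) (-1) ^+ k * 'C(n, k)%:R * (delannoy k m ^ 2)%:R
  = (-1) ^+ n * \sum_(j < n.+1) (legendre_coef m j * 'C(j, n - j))%:R :> R.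
Proof.
pose G j := (legendre_coef m j * if (j <= n)%N then 'C(j, n - j) else 0)%N.
have G0 j : (minn m.+1 n.+1 <= j)%N -> G j = 0%N.
  rewrite geq_min /G /legendre_coef => /orP[lt_mj | lt_nj].
    by rewrite bin_small.
  by rewrite leqNgt lt_nj muln0.
under eq_bigr do rewrite delannoy_sqr natr_sum mulr_sumr.
rewrite exchange_big /= mulr_sumr.
transitivity (\sum_(j < m.+1) (-1) ^+ n * (G j)%:R : R).
  apply: eq_bigr => j _.
  rewrite /G -bin_double_sub natrM mulrCA -sum_alt_bin_binom mulr_sumr.
  by apply: eq_bigr => k _; rewrite natrM; ring.
rewrite (big_ord_trunc (F := fun j => (-1) ^+ n * (G j)%:R : R) (geq_minl m.+1 n.+1)); last first.
  by move=> j /andP[/G0-> _]; rewrite mulr0.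
rewrite -(big_ord_trunc (F := fun j => (-1) ^+ n * (G j)%:R : R) (geq_minr m.+1 n.+1)); last first.
  by move=> j /andP[/G0-> _]; rewrite mulr0.
by apply: eq_bigr => j _; rewrite /G -ltnS ltn_ord.
Qed.

Lemma mul_bin_central k : (k.+1 * 'C(k.+1.*2, k.+1) = 2 * k.*2.+1 * 'C(k.*2, k))%N.
Proof.
have e1 := mul_bin_diag k.+1.*2 k.
have e2 := mul_bin_diag k.*2.+1 k.
have sym : 'C(k.*2.+1, k.+1) = 'C(k.*2.+1, k).
  by rewrite -[in RHS]bin_sub -addnn; [congr 'C(_, _) |]; lia.
by rewrite /= sym in e1 e2; rewrite -e1 -mulnA e2 mulnA mul2n.
Qed.

Lemma natr_ffact (R : pzRingType) n k : (n ^_ k)%:R = \prod_(i < k) (n%:R - i%:R) :> R.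
Proof.
elim: k => [|k IHk]; first by rewrite ffactn0 big_ord0.
rewrite ffactnSr natrM big_ord_recr /= -IHk.
by case: (leqP k n) => [/natrB-> | /ffact_small->]; rewrite ?mul0r.
Qed.

Section CharP.

Context {F : fieldType} {p : nat}.
Hypothesis charFp : p \in [pchar F].

Lemma natf_neq0_lt k : (0 < k < p)%N -> k%:R != 0 :> F.
Proof. by case/andP=> k_gt0 lt_kp; rewrite -(dvdn_pcharf charFp) gtnNdvd. Qed.

Lemma natf_fact_neq0 k : (k < p)%N -> k`!%:R != 0 :> F.
Proof.
elim: k => [|k IHk] lt_kp; first by rewrite oner_neq0.
by rewrite factS natrM mulf_neq0 ?IHk ?natf_neq0_lt // ltnW.
Qed.

Lemma binomR_natr m k : (k < p)%N -> binomR (m%:R : F) k = 'C(m, k)%:R.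
Proof.
by move=> lt_kp; rewrite /binomR -natr_ffact -bin_ffact natrM mulfK ?natf_fact_neq0.
Qed.

Lemma dpoly_natr k m : (k < p)%N -> dpoly k (m%:R : F) = (delannoy k m)%:R.
Proof.
move=> lt_kp; rewrite /dpoly /delannoy natr_sum; apply: eq_bigr => i _.
by rewrite binomR_natr ?natrM ?natrX // (leq_ltn_trans _ lt_kp) // -ltnS.
Qed.

Context {n : nat}.
Hypothesis p_eq : n.*2.+1 = p.

Lemma natr_bin_central k : (k < p)%N -> 'C(k.*2, k)%:R = (-4) ^+ k * 'C(n, k)%:R :> F.
Proof.
elim: k => [|k IHk] lt_kp; first by rewrite !bin0 expr0 mul1r.
have k1_neq0 : k.+1%:R != 0 :> F by rewrite natf_neq0_lt.
apply: (mulfI k1_neq0); rewrite -natrM mul_bin_central natrM IHk ?(ltnW lt_kp) //.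
rewrite [RHS]mulrCA natr_mul_bin_left.
have p0 : n.*2.+1%:R = 0 :> F by rewrite p_eq (pcharf0 charFp).
apply/eqP; rewrite -subr_eq0; apply/eqP.
transitivity (2 * (-4) ^+ k * 'C(n, k)%:R * n.*2.+1%:R : F); last by rewrite p0 mulr0.
by rewrite exprS -!addnn; ring.
Qed.

Lemma sum_central_dpoly_sqr m :
  \sum_(k < p) 'C(k.*2, k)%:R / 4 ^+ k * dpoly k (m%:R : F) ^+ 2
  = \sum_(k < n.+1) (-1) ^+ k * 'C(n, k)%:R * (delannoy k m ^ 2)%:R.
Proof.
have lt_np : (n < p)%N by rewrite -p_eq -addnn; lia.
have four_neq0 : 4 != 0 :> F.
  rewrite (_ : 4 = 2 ^+ 2) ?expf_neq0 ?natf_neq0_lt -?natrX //.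
  by move: (pcharf_prime charFp); rewrite -p_eq; case: n => [|[|]].
rewrite (big_ord_trunc (F := fun k => 'C(k.*2, k)%:R / 4 ^+ k * dpoly k (m%:R : F) ^+ 2) lt_np).
  apply: eq_bigr => k _; have lt_kp : (k < p)%N := leq_trans (ltn_ord k) lt_np.
  rewrite natr_bin_central // dpoly_natr // natrX -mulN1r exprMn.
  by field; rewrite expf_neq0.
by move=> k /andP[lt_nk lt_kp]; rewrite natr_bin_central ?bin_small ?mulr0 ?mul0r.
Qed.

End CharP.

Theorem mainTheorem2 (p : nat) (hp : prime p) (hodd : odd p) (x : 'F_p) :
  \sum_(k < p) ('C(k.*2, k))%:R / 4 ^+ k * (dpoly k x) ^+ 2
  = (-1) ^+ ((p - 1)./2) *
    \sum_(j < ((p - 1)./2).+1)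
       binomR x j * binomR (x + j%:R) j * ('C(j, (p - 1)./2 - j))%:R * 4 ^+ j.
Proof.
set n := (p - 1)./2.
have p_eq : n.*2.+1 = p.
  have := odd_double_half p; rewrite hodd add1n => p_eq.
  by rewrite /n -{1}p_eq subn1 /= doubleK.
have lt_np : (n < p)%N by rewrite -p_eq -addnn; lia.
have charFp := pchar_Fp hp.
rewrite -(natr_Zp x) (sum_central_dpoly_sqr charFp p_eq) sum_alt_delannoy_sqr.
congr (_ * _); apply: eq_bigr => j _; have lt_jp := leq_ltn_trans (leq_ord j) lt_np.
by rewrite -natrD !(binomR_natr charFp) // /legendre_coef !natrM natrX; ring.
Qed.
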